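(* Let $G$ be a group, $N\trianglelefteq G$ and $\mathcal{H}$ a family of proper subgroups of $G$ that is strongly divided by $N$. Let $\widetilde{\mathcal{H}}$ denote the family of all finite (nonempty) intersections of elements of $\mathcal{H}$. Then $\widetilde{\mathcal{H}}$ is divided by $N$; moreover (1) $\widetilde{\mathcal{H}}^N=\widetilde{\mathcal{H}^N}$, the family of all finite intersections of elements of $\mathcal{H}^N$, and (2) $\overline{\widetilde{\mathcal{H}}}=\widetilde{\overline{\mathcal{H}}}$, the family of all finite intersections of elements of $\overline{\mathcal{H}}$.
   Context: For a family $\mathcal{K}$ of proper subgroups of $G$ write $\mathcal{K}_N=\{H\in\mathcal{K}: HN\neq G\}$ and $\mathcal{K}^N=\{K\in\mathcal{K}: KN=G\}$; for $H\le G$ let $\overline{H}$ be its image in $G/N$ and $\overline{\mathcal{K}}=\{\overline{H}: H\in\mathcal{K}_N\}$. $\mathcal{K}$ is divided by $N$ if (1) $HN\in\mathcal{K}$ for all $H\in\mathcal{K}_N$, and (2) $HN\cap K\in\mathcal{K}$ for all $H\in\mathcal{K}_N$, $K\in\mathcal{K}^N$. $\mathcal{K}$ is strongly divided by $N$ if (1) $N\subseteq H$ for all $H\in\mathcal{K}_N$, and (2) $(K_1\cap\dots\cap K_m)N=G$ for all finite collections $K_1,\dots,K_m\in\mathcal{K}^N$. *)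

From Stdlib Require Import List.
Import ListNotations.

Record group := Group {
  carrier :> Type;
  gmul : carrier -> carrier -> carrier;
  gone : carrier;
  ginv : carrier -> carrier;
  gmulA : forall x y z, gmul x (gmul y z) = gmul (gmul x y) z;
  gmul1 : forall x, gmul gone x = x;
  gmulV : forall x, gmul (ginv x) x = gone
}.
Arguments gmul {g} _ _.
Arguments gone {g}.
Arguments ginv {g} _.

Definition set (T : Type) := T -> Prop.
Definition family (T : Type) := set (set T).

Definition setI {T : Type} (A B : set T) : set T := fun x => A x /\ B x.
Definition setT {T : Type} : set T := fun _ => True.
Definition subset {T : Type} (A B : set T) : Prop := forall x, A x -> B x.

Definition bigcap {T : Type} (Ks : list (set T)) : set T :=
  fold_right setI setT Ks.

Definition tilde {T : Type} (K : family T) : family T :=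
  fun H => exists Ks : list (set T),
    Ks <> [] /\ (forall K0, In K0 Ks -> K K0) /\ H = bigcap Ks.

Definition is_subgroup {G : group} (H : set G) : Prop :=
  H gone /\
  (forall x y, H x -> H y -> H (gmul x y)) /\
  (forall x, H x -> H (ginv x)).

Definition is_normal {G : group} (N : set G) : Prop :=
  is_subgroup N /\
  forall g n, N n -> N (gmul (ginv g) (gmul n g)).

Definition proper_subgroup {G : group} (H : set G) : Prop :=
  is_subgroup H /\ exists g, ~ H g.

Definition family_of_proper_subgroups {G : group} (K : family G) : Prop :=
  forall H, K H -> proper_subgroup H.

Definition setmul {G : group} (H N : set G) : set G :=
  fun x => exists h n, H h /\ N n /\ x = gmul h n.

Definition full {G : group} (S : set G) : Prop := forall x, S x.

(* K_N = {H in K : HN <> G},  K^N = {K in K : KN = G} *)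
Definition fam_sub {G : group} (K : family G) (N : set G) : family G :=
  fun H => K H /\ ~ full (setmul H N).
Definition fam_sup {G : group} (K : family G) (N : set G) : family G :=
  fun H => K H /\ full (setmul H N).

Definition divided_by {G : group} (K : family G) (N : set G) : Prop :=
  (forall H, fam_sub K N H -> K (setmul H N)) /\
  (forall H K0, fam_sub K N H -> fam_sup K N K0 -> K (setI (setmul H N) K0)).

Definition strongly_divided_by {G : group} (K : family G) (N : set G) : Prop :=
  (forall H, fam_sub K N H -> subset N H) /\
  (forall Ks : list (set G), Ks <> [] ->
     (forall K0, In K0 Ks -> fam_sup K N K0) -> full (setmul (bigcap Ks) N)).

Definition coset {G : group} (N : set G) (x : G) : set G :=
  fun y => exists n, N n /\ y = gmul x n.

Definition quot {G : group} (N : set G) : Type :=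
  { S : set G | exists x, S = coset N x }.

Definition qproj {G : group} (N : set G) (x : G) : quot N :=
  exist _ (coset N x) (ex_intro _ x eq_refl).

Definition bar {G : group} (N : set G) (H : set G) : set (quot N) :=
  fun q => exists h, H h /\ q = qproj N h.

(* \overline{K} = { \overline{H} : H in K_N } *)
Definition bar_family {G : group} (K : family G) (N : set G) : family (quot N) :=
  fun Q => exists H, fam_sub K N H /\ Q = bar N H.

(* Let H be a family of proper subgroups of G strongly divided by the normal
   subgroup N, and let X = K_1 ∩ ... ∩ K_m be a member of the intersection
   family H~.  Sorting the K_i according to whether K_i N <> G or K_i N = G
   writes X = A ∩ B, where A is an intersection of members of H_N (each of
   which contains N) and B an intersection of members of H^N (so B N = G by
   strong division).  Dedekind's modular law then gives X N = A.  Hence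
   X N = G exactly when no K_i lies in H_N, and otherwise X N is a member of
   H~ built from H_N alone; the three claims follow from this description. *)
From Stdlib Require Import List.
From Stdlib Require Import FunctionalExtensionality PropExtensionality ProofIrrelevance Classical.
Import ListNotations.

(* The group axioms of [group] are one-sided; the left inverse is also a
   right inverse ... *)
Lemma gmulV_r {G : group} (x : G) : gmul x (ginv x) = gone.
Proof.
  set (e := gmul x (ginv x)).
  assert (idem_e : gmul e e = e).
  { unfold e. rewrite <- gmulA, (gmulA G (ginv x) x (ginv x)), gmulV, gmul1.
    reflexivity. }
  transitivity (gmul (ginv e) (gmul e e)).
  - rewrite gmulA, gmulV, gmul1. reflexivity.
  - rewrite idem_e. apply gmulV.
Qed.

(* ... and the left unit is also a right unit. *)
Lemma gmul1_r {G : group} (x : G) : gmul x gone = x.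
Proof. rewrite <- (gmulV G x), gmulA, gmulV_r, gmul1. reflexivity. Qed.

Lemma set_ext {T : Type} (A B : set T) : (forall x, A x <-> B x) -> A = B.
Proof.
  intros AB. apply functional_extensionality; intros x.
  apply propositional_extensionality, AB.
Qed.

Lemma bigcap_In {T : Type} (L : list (set T)) (x : T) :
  bigcap L x <-> forall A, In A L -> A x.
Proof.
  induction L as [|a L IH]; simpl; unfold setI.
  - split; [intros _ A []|intros _; exact I].
  - rewrite IH. split.
    + intros [ax Lx] A [<-|AL]; [exact ax|exact (Lx A AL)].
    + intros Lx. split; [apply Lx; left; reflexivity|].
      intros A AL. apply Lx. right. exact AL.
Qed.

Lemma bigcap_subset {T : Type} (L : list (set T)) (A : set T) :
  In A L -> subset (bigcap L) A.
Proof. intros AL x Lx. exact (proj1 (bigcap_In L x) Lx A AL). Qed.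

Lemma subset_bigcap {T : Type} (S : set T) (L : list (set T)) :
  (forall A, In A L -> subset S A) -> subset S (bigcap L).
Proof. intros SL x Sx. apply bigcap_In. intros A AL. exact (SL A AL x Sx). Qed.

Lemma bigcap_app {T : Type} (L1 L2 : list (set T)) :
  bigcap (L1 ++ L2) = setI (bigcap L1) (bigcap L2).
Proof.
  apply set_ext; intros x. unfold setI. rewrite !bigcap_In. split.
  - intros Lx. split; intros A AL; apply Lx, in_or_app; [left|right]; exact AL.
  - intros [L1x L2x] A AL.
    destruct (in_app_or _ _ _ AL) as [AL1|AL2]; [exact (L1x A AL1)|exact (L2x A AL2)].
Qed.

Lemma bigcap_subgroup {G : group} (L : list (set G)) :
  (forall A, In A L -> is_subgroup A) -> is_subgroup (bigcap L).
Proof.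
  intros subL. repeat split.
  - apply bigcap_In. intros A AL. apply (subL A AL).
  - intros x y Lx Ly. apply bigcap_In. intros A AL.
    apply (subL A AL); apply (bigcap_subset L A AL); assumption.
  - intros x Lx. apply bigcap_In. intros A AL.
    apply (subL A AL), (bigcap_subset L A AL), Lx.
Qed.

Lemma setmul_mono {G : group} (A B N : set G) :
  subset A B -> subset (setmul A N) (setmul B N).
Proof. intros AB x (a & n & Aa & Nn & ->). exists a, n. auto. Qed.

Lemma full_setmul_mono {G : group} (A B N : set G) :
  subset A B -> full (setmul A N) -> full (setmul B N).
Proof. intros AB fullA x. exact (setmul_mono A B N AB x (fullA x)). Qed.

Lemma subset_setmul {G : group} (A N : set G) : N gone -> subset A (setmul A N).
Proof. intros N1 x Ax. exists x, gone. rewrite gmul1_r. auto. Qed.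

(* Dedekind's modular law in the form needed here: if A is a subgroup
   containing N and B N = G, then (A ∩ B) N = A. *)
Lemma modular_law {G : group} (A B N : set G) :
  is_subgroup A -> subset N A -> full (setmul B N) -> setmul (setI A B) N = A.
Proof.
  intros (_ & mulA & invA) NA fullB. apply set_ext; intros x. split.
  - intros (a & n & [Aa _] & Nn & ->). apply mulA; auto.
  - intros Ax. destruct (fullB x) as (b & n & Bb & Nn & x_bn).
    exists b, n. repeat split; auto.
    (* b = x n^-1 lies in A because x and n do *)
    assert (b_eq : b = gmul x (ginv n)).
    { rewrite x_bn, <- gmulA, gmulV_r, gmul1_r. reflexivity. }
    rewrite b_eq. apply mulA; auto.
Qed.

Section Quotient.
Context {G : group} (N : set G).
Hypothesis N_subgroup : is_subgroup N.

Lemma qproj_eq (x y : G) : coset N x = coset N y -> qproj N x = qproj N y.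
Proof.
  intros E. unfold qproj.
  generalize (ex_intro (fun z : G => coset N x = coset N z) x eq_refl).
  generalize (ex_intro (fun z : G => coset N y = coset N z) y eq_refl).
  rewrite E. intros p q. f_equal. apply proof_irrelevance.
Qed.

Lemma qproj_mul (x n : G) : N n -> qproj N (gmul x n) = qproj N x.
Proof.
  destruct N_subgroup as (_ & mulN & invN). intros Nn. apply qproj_eq, set_ext.
  intros y. split.
  - intros (m & Nm & ->). exists (gmul n m). split; auto. symmetry; apply gmulA.
  - intros (m & Nm & ->). exists (gmul (ginv n) m). split; auto.
    rewrite <- gmulA, (gmulA G n), gmulV_r, gmul1. reflexivity.
Qed.

Lemma qproj_inj (x y : G) :
  qproj N x = qproj N y -> exists n, N n /\ x = gmul y n.
Proof.
  intros E. apply (f_equal (@proj1_sig _ _)) in E. simpl in E.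
  assert (x_in : coset N x x).
  { exists gone. split; [apply N_subgroup|symmetry; apply gmul1_r]. }
  rewrite E in x_in. exact x_in.
Qed.

Lemma subgroup_saturated (A : set G) (x y : G) :
  is_subgroup A -> subset N A -> qproj N x = qproj N y -> A y -> A x.
Proof.
  intros (_ & mulA & _) NA E Ay. destruct (qproj_inj x y E) as (n & Nn & ->).
  apply mulA; auto.
Qed.

Lemma bar_setmul (X : set G) : bar N (setmul X N) = bar N X.
Proof.
  apply set_ext; intros q. split.
  - intros (h & (x & n & Xx & Nn & ->) & ->). exists x. split; auto.
    apply qproj_mul, Nn.
  - intros (x & Xx & ->). exists x. split; auto.
    apply subset_setmul; [apply N_subgroup|exact Xx].
Qed.

Lemma bar_bigcap (L : list (set G)) :
  L <> [] -> (forall A, In A L -> is_subgroup A /\ subset N A) ->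
  bar N (bigcap L) = bigcap (map (bar N) L).
Proof.
  intros L_ne subL. apply set_ext; intros q. rewrite bigcap_In. split.
  - intros (x & Lx & ->) Q QL. apply in_map_iff in QL.
    destruct QL as (A & <- & AL). exists x. split; auto.
    apply (bigcap_subset L A AL), Lx.
  - intros qL. destruct L as [|a L']; [congruence|].
    destruct (qL (bar N a) (or_introl eq_refl)) as (x & _ & ->).
    exists x. split; auto. apply bigcap_In. intros A AL.
    destruct (qL (bar N A) (in_map _ _ _ AL)) as (y & Ay & E).
    destruct (subL A AL) as [subA NA].
    exact (subgroup_saturated A x y subA NA E Ay).
Qed.

End Quotient.

Lemma tilde_bigcap {T : Type} (F : family T) (L : list (set T)) :
  L <> [] -> (forall A, In A L -> F A) -> tilde F (bigcap L).
Proof. intros L_ne LF. exists L. auto. Qed.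

Section StronglyDivided.
Variables (G : group) (N : set G) (H : family G).
Hypothesis N_subgroup : is_subgroup N.
Hypothesis H_proper : family_of_proper_subgroups H.
Hypothesis H_sd : strongly_divided_by H N.

Lemma fam_sub_contains (A : set G) :
  fam_sub H N A -> is_subgroup A /\ subset N A.
Proof.
  intros subA. split; [apply (H_proper A (proj1 subA))|apply (proj1 H_sd A subA)].
Qed.

(* Strong division, extended to the empty intersection G. *)
Lemma full_setmul_sup (LB : list (set G)) :
  (forall B, In B LB -> fam_sup H N B) -> full (setmul (bigcap LB) N).
Proof.
  intros supLB. destruct LB as [|b LB].
  - intros x. apply subset_setmul; [apply N_subgroup|exact I].
  - apply (proj2 H_sd); [discriminate|exact supLB].
Qed.

Lemma split_sub_sup (L : list (set G)) :
  (forall K, In K L -> H K) ->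
  exists LA LB, (forall A, In A LA -> fam_sub H N A) /\
    (forall B, In B LB -> fam_sup H N B) /\
    bigcap L = setI (bigcap LA) (bigcap LB).
Proof.
  induction L as [|K L IH]; intros HL.
  - exists [], []. split; [intros A []|split; [intros B []|]].
    apply set_ext. unfold setI. simpl. tauto.
  - destruct IH as (LA & LB & subLA & supLB & E); [intros K0 K0L; apply HL; right; auto|].
    assert (HK : H K) by (apply HL; left; reflexivity).
    destruct (classic (full (setmul K N))) as [fullK|not_fullK].
    + exists LA, (K :: LB). split; [exact subLA|split].
      * intros B [<-|BL]; [split; auto|auto].
      * apply set_ext; intros x. simpl. rewrite E. unfold setI. tauto.
    + exists (K :: LA), LB. split; [|split; [exact supLB|]].
      * intros A [<-|AL]; [split; auto|auto].
      * apply set_ext; intros x. simpl. rewrite E. unfold setI. tauto.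
Qed.

Lemma setmul_tilde (X : set G) :
  tilde H X -> ~ full (setmul X N) ->
  exists LA, LA <> [] /\ (forall A, In A LA -> fam_sub H N A) /\
             setmul X N = bigcap LA.
Proof.
  intros (L & _ & HL & ->) not_full.
  destruct (split_sub_sup L HL) as (LA & LB & subLA & supLB & E).
  assert (XN : setmul (bigcap L) N = bigcap LA).
  { rewrite E. apply modular_law.
    - apply bigcap_subgroup. intros A AL. apply (fam_sub_contains A (subLA A AL)).
    - apply subset_bigcap. intros A AL. apply (fam_sub_contains A (subLA A AL)).
    - apply full_setmul_sup, supLB. }
  exists LA. split; [|split; [exact subLA|exact XN]].
  intros ->. apply not_full. rewrite XN. intros x. exact I.
Qed.

Lemma tilde_divided : divided_by (tilde H) N.
Proof.
  split.
  - intros X [HX not_full]. destruct (setmul_tilde X HX not_full) as (LA & LA_ne & subLA & ->).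
    apply tilde_bigcap; auto. intros A AL. apply (subLA A AL).
  - intros X K [HX not_full] [(L & L_ne & HL & ->) _].
    destruct (setmul_tilde X HX not_full) as (LA & LA_ne & subLA & ->).
    rewrite <- bigcap_app. apply tilde_bigcap.
    + destruct LA; [congruence|discriminate].
    + intros A AL. destruct (in_app_or _ _ _ AL); auto. apply (subLA A); auto.
Qed.

Lemma tilde_fam_sup : fam_sup (tilde H) N = tilde (fam_sup H N).
Proof.
  apply set_ext; intros X. split.
  - intros [(L & L_ne & HL & ->) fullX]. apply tilde_bigcap; auto.
    intros K KL. split; auto. exact (full_setmul_mono _ _ N (bigcap_subset L K KL) fullX).
  - intros (L & L_ne & supL & ->). split.
    + apply tilde_bigcap; auto. intros K KL. apply (supL K KL).
    + apply full_setmul_sup, supL.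
Qed.

Lemma lift_bar_list (Qs : list (set (quot N))) :
  (forall Q, In Q Qs -> bar_family H N Q) ->
  exists LA, Qs = map (bar N) LA /\ (forall A, In A LA -> fam_sub H N A).
Proof.
  induction Qs as [|Q Qs IH]; intros barQs.
  - exists []. split; auto. intros A [].
  - destruct IH as (LA & -> & subLA); [intros Q0 Q0s; apply barQs; right; auto|].
    destruct (barQs Q (or_introl eq_refl)) as (A & subA & ->).
    exists (A :: LA). split; [reflexivity|]. intros A0 [<-|A0L]; auto.
Qed.

Lemma tilde_bar_family : bar_family (tilde H) N = tilde (bar_family H N).
Proof.
  apply set_ext; intros Q. split.
  - intros (X & [HX not_full] & ->).
    destruct (setmul_tilde X HX not_full) as (LA & LA_ne & subLA & E).
    rewrite <- (bar_setmul N N_subgroup), E, (bar_bigcap N N_subgroup LA LA_ne);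
      [|intros A AL; apply fam_sub_contains, subLA, AL].
    apply tilde_bigcap; [destruct LA; [congruence|discriminate]|].
    intros Q0 Q0L. apply in_map_iff in Q0L. destruct Q0L as (A & <- & AL).
    exists A. auto.
  - intros (Qs & Qs_ne & barQs & ->).
    destruct (lift_bar_list Qs barQs) as (LA & -> & subLA).
    destruct LA as [|A LA']; [contradiction Qs_ne; reflexivity|].
    exists (bigcap (A :: LA')). repeat split.
    + apply tilde_bigcap; [discriminate|]. intros K KL. apply (subLA K KL).
    + intros fullX. apply (proj2 (subLA A (or_introl eq_refl))).
      exact (full_setmul_mono _ _ N (bigcap_subset (A :: LA') A (or_introl eq_refl)) fullX).
    + symmetry. apply (bar_bigcap N N_subgroup); [discriminate|].
      intros K KL. apply fam_sub_contains, subLA, KL.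
Qed.

End StronglyDivided.

Theorem lemma3p18 (G : group) (N : set G) (H : family G) :
  is_normal N ->
  family_of_proper_subgroups H ->
  strongly_divided_by H N ->
  divided_by (tilde H) N /\
  fam_sup (tilde H) N = tilde (fam_sup H N) /\
  bar_family (tilde H) N = tilde (bar_family H N).
Proof.
  intros [N_subgroup _] H_proper H_sd. repeat split.
  - apply (tilde_divided G N H N_subgroup H_proper H_sd).
  - apply (tilde_divided G N H N_subgroup H_proper H_sd).
  - apply (tilde_fam_sup G N H N_subgroup H_sd).
  - apply (tilde_bar_family G N H N_subgroup H_proper H_sd).
Qed.
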